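(* For every infinite word $w\in A_q^{\omega}$, the image $\mathcal{D}_{p/q}(w)$ exists and is unique.
   Context: Let $p>q>1$ be coprime integers, $A_q=\{0,1,\dots,q-1\}$ and $B=\{p-(2q-1),\dots,p-1\}$. For $n\in\mathbb{N}$ and $a\in\mathbb{Z}$, let $\tau(n,a)=\frac{np+a}{q}$, defined only when $q$ divides $np+a$. For $a\in B$ let $\omega(a)=\{(b,c)\in A_q\times A_q : c-b=a-(p-q)\}$. The transducer $\mathcal{D}_{p/q}$ has state set $\mathbb{N}$, input and output alphabet $A_q$, initial state $0$, and has a transition $n\xrightarrow{b|c}\tau(n,a)$ for every $n\in\mathbb{N}$, every $a\in B$ with $\tau(n,a)$ defined, and every $(b,c)\in\omega(a)$; no other transitions. For a finite word $u$, its image $\mathcal{D}_{p/q}(u)$ is the word $v$ (if it exists) such that there is a path from state $0$ reading input $u$ and producing output $v$. The image of an infinite word $w$ is an infinite word $w'$ such that for every finite prefix $u$ of $w$, $\mathcal{D}_{p/q}(u)$ exists and is a prefix of $w'$. *)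

From mathcomp Require Import all_boot all_order all_algebra.
Set Implicit Arguments. Unset Strict Implicit. Unset Printing Implicit Defensive.
Import Order.TTheory GRing.Theory Num.Theory.

(* Transducer D_{p/q}: states are naturals, letters of A_q are naturals < q. *)

(* transition n --b|c--> m : there is a in B = {p-(2q-1),...,p-1} (integers)
   with tau(n,a) = (n p + a)/q defined (q divides n p + a) and equal to the
   state m (a natural number), and (b,c) in omega(a), i.e. b,c in A_q and
   c - b = a - (p - q). *)
Definition trans (p q : nat) (n b c m : nat) : Prop :=
  exists a : int,
    [/\ (p%:Z - (2 * q - 1)%:Z <= a)%R, (a <= p%:Z - 1)%R,
        (m%:Z * q%:Z = n%:Z * p%:Z + a)%R,
        (b < q) /\ (c < q) &
        (c%:Z - b%:Z = a - (p%:Z - q%:Z))%R].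

Fixpoint run (p q : nat) (n : nat) (u v : seq nat) : Prop :=
  match u, v with
  | [::], [::] => True
  | b :: u', c :: v' => exists m, trans p q n b c m /\ run p q m u' v'
  | _, _ => False
  end.

Definition fin_image (p q : nat) (u v : seq nat) : Prop := run p q 0 u v.

Definition pref (w : nat -> nat) (n : nat) : seq nat := mkseq w n.

Definition is_prefix (v : seq nat) (w' : nat -> nat) : Prop :=
  forall i, i < size v -> nth 0 v i = w' i.

Definition inf_image (p q : nat) (w w' : nat -> nat) : Prop :=
  forall n, (exists v, fin_image p q (pref w n) v) /\
            (forall v, fin_image p q (pref w n) v -> is_prefix v w').

From mathcomp Require Import all_boot all_order all_algebra zify.
From Stdlib Require Import FunctionalExtensionality.

(* The transducer is deterministic and letter-to-letter: a transition
   n --b|c--> m amounts to (m + 1) q = (n + 1) p - b + c with c < q, so c and m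
   are forced to be the residue and the quotient that round (n + 1) p - b up to
   the next multiple of q.  Hence each finite word has exactly one image, these
   images are prefixes of one another, and the image of an infinite word is the
   limit of the images of its prefixes. *)

Set Implicit Arguments.
Unset Strict Implicit.
Unset Printing Implicit Defensive.

Local Open Scope nat_scope.

Section Transducer.
Variables p q : nat.

Definition next_state (n b : nat) : nat := (n.+1 * p - b).-1 %/ q.

Definition next_output (n b : nat) : nat := (next_state n b).+1 * q - (n.+1 * p - b).

Lemma trans_next n b : q <= p -> b < q ->
  trans p q n b (next_output n b) (next_state n b).
Proof.
move=> hqp hb; rewrite /next_output /next_state.
set Z := n.+1 * p - b.
have hZ : 0 < Z by rewrite /Z; nia.
have := divn_eq Z.-1 q; have := ltn_pmod Z.-1 (leq_ltn_trans (leq0n b) hb).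
set m := Z.-1 %/ q => hr hdiv.
exists ((m.+1 * q - Z)%:Z - b%:Z + p%:Z - q%:Z)%R; split; rewrite /Z in hZ hdiv *; nia.
Qed.

Lemma trans_functional n b c m c' m' :
  trans p q n b c m -> trans p q n b c' m' -> c = c' /\ m = m'.
Proof.
move=> [a [_ _ hm [_ hc] hca]] [a' [_ _ hm' [_ hc'] hca']].
have hdiff : (m%:Z * q%:Z - m'%:Z * q%:Z = c%:Z - c'%:Z)%R by lia.
have Em : m = m' by nia.
by subst m; split=> //; lia.
Qed.

Lemma run_functional n u v v' : run p q n u v -> run p q n u v' -> v = v'.
Proof.
elim: u n v v' => [|b u IHu] n [|c v] [|c' v'] //= [m [hnm hm]] [m' [hnm' hm']].
have [-> Em] := trans_functional hnm hnm'.
by rewrite (IHu m v v') // Em.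
Qed.

Fixpoint image_from (n : nat) (u : seq nat) : seq nat :=
  if u is b :: u' then next_output n b :: image_from (next_state n b) u' else [::].

Lemma run_image_from n u : q <= p -> all (fun b => b < q) u ->
  run p q n u (image_from n u).
Proof.
move=> hqp; elim: u n => [|b u IHu] n //= /andP[hb hu].
by exists (next_state n b); split; [exact: trans_next | exact: IHu].
Qed.

Lemma size_image_from n u : size (image_from n u) = size u.
Proof. by elim: u n => [|b u IHu] n //=; rewrite IHu. Qed.

Lemma image_from_take n k u : image_from n (take k u) = take k (image_from n u).
Proof. by elim: u n k => [|b u IHu] n [|k] //=; rewrite IHu. Qed.

End Transducer.

Lemma take_pref (w : nat -> nat) k n : k <= n -> take k (pref w n) = pref w k.
Proof. by move=> hkn; rewrite /pref /mkseq -map_take take_iota (minn_idPl hkn). Qed.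

Theorem mainTheorem2 (p q : nat) (hq : 1 < q) (hpq : q < p) (hcop : coprime p q)
  (w : nat -> nat) (hw : forall i, w i < q) :
  exists! w' : nat -> nat, inf_image p q w w'.
Proof.
pose D n := image_from p q 0 (pref w n).
have hqp : q <= p := ltnW hpq.
have run_D n : fin_image p q (pref w n) (D n).
  by apply: run_image_from => //; apply/allP => _ /mapP[i _ ->].
have image_D n v : fin_image p q (pref w n) v -> v = D n.
  by move/run_functional; apply; exact: run_D.
exists (fun i => nth 0 (D i.+1) i); split.
- move=> n; split; first by exists (D n).
  move=> v /image_D -> i; rewrite size_image_from size_mkseq => hin.
  by rewrite /D -(take_pref w hin) image_from_take nth_take.
- move=> w' hw'; apply: functional_extensionality => i.
  have [_ /(_ _ (run_D i.+1) i)] := hw' i.+1.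
  by rewrite size_image_from size_mkseq ltnSn => /(_ isT).
Qed.
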